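(* Let $p\ge 1$, let $n_1,\dots,n_p\ge1$ and $k_s\in[n_s]$ for each $s$. Suppose there is a maximum-size non-trivially intersecting family $\mathcal{F}\subseteq \prod_{s}\binom{[n_s]}{k_s}$ which is $Q$-shifted for some $Q\subsetneq [p]$ such that $k_t=1$ for every $t\notin Q$. Then there is a maximum-size non-trivially intersecting family $\mathcal{F}'\subseteq \prod_{s}\binom{[n_s]}{k_s}$ which is shifted.
   Context: Multi-part setting: the ground set is the disjoint union $\bigsqcup_{s=1}^p [n_s]$ of $p$ parts, $[n]=\{1,\dots,n\}$. For $F_s\subseteq[n_s]$, $\bigsqcup_s F_s$ denotes the subset having $F_s$ in part $s$; $\prod_{s}\binom{[n_s]}{k_s}$ is the collection of all $\bigsqcup_s F_s$ with $|F_s|=k_s$ for all $s$. A family is intersecting if any two of its sets intersect (in some part); trivially intersecting if some element (in some part) lies in all its sets; non-trivially intersecting if intersecting but not trivially intersecting. ''Maximum-size'' means of maximum size among all non-trivially intersecting subfamilies of $\prod_{s}\binom{[n_s]}{k_s}$. Shifting: for $t\in[p]$, $1\le i<j\le n_t$ and $F=\bigsqcup_s F_s$, $S_t^{i,j}(F)=F$ if $i\in F_t$ or $j\notin F_t$, and otherwise $S_t^{i,j}(F)$ replaces $F_t$ by $(F_t\setminus\{j\})\cup\{i\}$. For a family, $S_t^{i,j}(\mathcal F)=\{S_t^{i,j}(F):F\in\mathcal F\}\cup\{F: F\in\mathcal F,\ S_t^{i,j}(F)\in\mathcal F\}$. $\mathcal F$ is $t$-shifted if $S_t^{i,j}(\mathcal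 F)=\mathcal F$ for all $1\le i<j\le n_t$, and shifted if $t$-shifted for all $t\in[p]$. A non-trivially intersecting family $\mathcal F$ is $Q$-shifted (for $Q\subseteq[p]$) if it is $s$-shifted for each $s\in Q$, and for each $s\notin Q$ there are $1\le i_s<j_s\le n_s$ such that $S_s^{i_s,j_s}(\mathcal F)$ is trivially intersecting. *)

From mathcomp Require Import all_boot.
Set Implicit Arguments. Unset Strict Implicit. Unset Printing Implicit Defensive.


(* Ground set: disjoint union of parts [n_s], s in 'I_p; element (s, i) with
   i : 'I_(n s) (0-based: i stands for i+1). *)
Definition ground (p : nat) (n : 'I_p -> nat) : finType :=
  {s : 'I_p & 'I_(n s)}.

Definition elt p (n : 'I_p -> nat) (s : 'I_p) (i : 'I_(n s)) : ground n :=
  existT (fun s => 'I_(n s)) s i.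

Definition part p (n : 'I_p -> nat) (A : {set ground n}) (s : 'I_p)
  : {set 'I_(n s)} := [set i | elt i \in A].

Definition prod_binom p (n k : 'I_p -> nat) : {set {set ground n}} :=
  [set A | [forall s, #|part A s| == k s]].

Definition intersecting p (n : 'I_p -> nat) (F : {set {set ground n}}) : Prop :=
  forall A B, A \in F -> B \in F -> A :&: B != set0.

Definition trivially_intersecting p (n : 'I_p -> nat)
  (F : {set {set ground n}}) : Prop :=
  exists x : ground n, forall A, A \in F -> x \in A.

Definition nontrivially_intersecting p (n : 'I_p -> nat)
  (F : {set {set ground n}}) : Prop :=
  intersecting F /\ ~ trivially_intersecting F.

Definition max_nontriv p (n k : 'I_p -> nat) (F : {set {set ground n}}) : Prop :=
  [/\ F \subset prod_binom n k, nontrivially_intersecting F &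
      forall F' : {set {set ground n}}, F' \subset prod_binom n k ->
        nontrivially_intersecting F' -> #|F'| <= #|F| ].

Definition shift_set p (n : 'I_p -> nat) (t : 'I_p) (i j : 'I_(n t))
  (A : {set ground n}) : {set ground n} :=
  if (elt i \in A) || (elt j \notin A) then A
  else (A :\ elt j) :|: [set elt i].

Definition shift_fam p (n : 'I_p -> nat) (t : 'I_p) (i j : 'I_(n t))
  (F : {set {set ground n}}) : {set {set ground n}} :=
  [set shift_set i j A | A in F] :|: [set A in F | shift_set i j A \in F].

Definition t_shifted p (n : 'I_p -> nat) (t : 'I_p) (F : {set {set ground n}})
  : Prop := forall i j : 'I_(n t), i < j -> shift_fam i j F = F.

Definition shifted p (n : 'I_p -> nat) (F : {set {set ground n}}) : Prop :=
  forall t : 'I_p, t_shifted t F.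

Definition Q_shifted p (n : 'I_p -> nat) (Q : {set 'I_p})
  (F : {set {set ground n}}) : Prop :=
  [/\ nontrivially_intersecting F,
      (forall s, s \in Q -> t_shifted s F) &
      (forall s, s \notin Q -> exists i j : 'I_(n s),
          i < j /\ trivially_intersecting (shift_fam i j F))].
Arguments max_nontriv {p} n k F.

From mathcomp Require Import all_boot fingroup perm.
Set Implicit Arguments. Unset Strict Implicit. Unset Printing Implicit Defensive.

(* For each part t outside Q fix a shift S_t^{i_t,j_t} turning F into a trivially
   intersecting family.  Its common point must be i_t, so (as k_t = 1) every set of F
   meets part t in {i_t} or in {j_t}, and exchanging i_t and j_t in part t never maps a
   set of F into F.  Since F is shifted in the parts of Q, pushing those parts to initial
   segments keeps a set in F; hence two sets of F agreeing on every part outside Q other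
   than t also agree on t.  Together with maximality this forces three parts a, b, c
   outside Q.  F and its exchanged copy are disjoint inside the family of sets meeting
   {i_u, j_u} in every part u outside Q, which has at most twice as many members as the
   family M of sets containing the first point of at least two of the parts a, b, c.
   Thus |F| <= |M|, and M is shifted and non-trivially intersecting. *)

Section Parts.
Variables (p : nat) (n k : 'I_p -> nat).
Implicit Types (X Y A : {set ground n}) (F : {set {set ground n}}).

Lemma in_part X s (a : 'I_(n s)) : (a \in part X s) = (elt a \in X).
Proof. by rewrite inE. Qed.

Lemma partP X Y : (forall s, part X s = part Y s) <-> X = Y.
Proof.
split=> [eqXY|-> //]; apply/setP=> -[s a].
by have /setP/(_ a) := eqXY s; rewrite !inE.
Qed.

Lemma eq_elt s (a b : 'I_(n s)) : (elt a == elt b :> ground n) = (a == b).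
Proof. by rewrite /elt eq_Tagged. Qed.

Lemma elt_neq s t (a : 'I_(n s)) (b : 'I_(n t)) : s != t -> elt a != elt b :> ground n.
Proof. by apply: contraNneq => /(congr1 tag) /= ->. Qed.

Lemma card_part_binom X s : X \in prod_binom n k -> #|part X s| = k s.
Proof. by rewrite inE => /forallP/(_ s)/eqP. Qed.

Lemma nontrivial_avoid F : ~ trivially_intersecting F ->
  forall x, exists2 A, A \in F & x \notin A.
Proof.
move=> Fnt x; apply/exists_inP; apply: contra_notT Fnt => /exists_inPn Fx.
by exists x => A /Fx; rewrite negbK.
Qed.

Lemma setI_part_neq0 X Y s (a : 'I_(n s)) :
  a \in part X s -> a \in part Y s -> X :&: Y != set0.
Proof. by rewrite !in_part => aX aY; apply/set0Pn; exists (elt a); rewrite inE aX aY. Qed.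

Lemma nontrivially_intersecting_setU1 Z F : nontrivially_intersecting F -> Z != set0 ->
  {in F, forall W, Z :&: W != set0} -> nontrivially_intersecting (Z |: F).
Proof.
move=> [Fint Fnt] Z0 ZF; split=> [A B|[x Gx]].
  case/setU1P=> [->|AF] /setU1P[->|BF]; first by rewrite setIid.
  - exact: ZF.
  - by rewrite setIC; apply: ZF.
  - exact: Fint.
by apply: Fnt; exists x => A AF; apply/Gx/setU1r.
Qed.

End Parts.

Lemma card_init m K : K <= m -> #|[set a : 'I_m | a < K]| = K.
Proof.
move=> leKm; have widen_inj : injective (widen_ord leKm).
  by move=> a b /(congr1 val) /= /val_inj.
rewrite -[RHS]card_ord -(card_imset _ widen_inj).
apply: eq_card => a; rewrite inE; apply/idP/imsetP => [ltaK|[b _ ->]]; last first.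
  by rewrite /= ltn_ord.
by exists (Ordinal ltaK) => //; apply: val_inj.
Qed.

Lemma preim_tperm1 (T : finType) (x y : T) : tperm x y @^-1: [set x] = [set y].
Proof.
apply/setP=> z; rewrite !inE; apply/eqP/eqP=> [|->]; last exact: tpermR.
by rewrite -{2}(tpermK x y z) => ->; rewrite tpermL.
Qed.

Section Relabelling.
Variables (p : nat) (n : 'I_p -> nat).
Implicit Types (pi : forall s, {perm 'I_(n s)}) (X : {set ground n}).

Definition relab pi X : {set ground n} := [set x | elt (pi (tag x) (tagged x)) \in X].

Lemma part_relab pi X s : part (relab pi X) s = pi s @^-1: part X s.
Proof. by apply/setP=> a; rewrite !inE. Qed.

Lemma relab_inj pi : injective (relab pi).
Proof.
move=> X Y /setP eqXY; apply/setP=> -[s a].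
by have := eqXY (elt ((pi s)^-1 a)%g); rewrite !inE /= permKV.
Qed.

Lemma relabK pi : (forall s, involutive (pi s)) -> involutive (relab pi).
Proof. by move=> piK X; apply/setP=> -[s a]; rewrite !inE /= piK. Qed.

Lemma relab_binom k pi X : X \in prod_binom n k -> relab pi X \in prod_binom n k.
Proof.
rewrite !inE => /forallP cardX; apply/forallP=> s.
by rewrite part_relab card_preimset ?cardX //; apply: perm_inj.
Qed.

End Relabelling.

Definition shift_part m (i j : 'I_m) (S : {set 'I_m}) : {set 'I_m} :=
  if (i \in S) || (j \notin S) then S else S :\ j :|: [set i].

Lemma card_shift_part m (i j : 'I_m) S : #|shift_part i j S| = #|S|.
Proof.
rewrite /shift_part; case: ifPn => // /norP[iS /negbNE jS].
by rewrite setUC cardsU1 !inE negb_and iS orbT (cardsD1 j S) jS.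
Qed.

Lemma mem_shift_part1 m (i j x : 'I_m) :
  i \in shift_part i j [set x] -> (x == i) || (x == j).
Proof.
rewrite /shift_part; case: ifP => [_|/norP[_ /negbNE]]; rewrite !inE.
  by rewrite eq_sym => ->.
by rewrite eq_sym => -> _; rewrite orbT.
Qed.

Section Shifting.
Variables (p : nat) (n k : 'I_p -> nat) (t : 'I_p) (i j : 'I_(n t)).
Implicit Types (X A : {set ground n}) (F : {set {set ground n}}).

Lemma part_shift_set X : part (shift_set i j X) t = shift_part i j (part X t).
Proof.
rewrite /shift_set /shift_part !in_part; case: ifP => // _.
by apply/setP=> a; rewrite !inE !eq_elt.
Qed.

Lemma part_shift_set_ne X s : s != t -> part (shift_set i j X) s = part X s.
Proof.
move=> st; rewrite /shift_set; case: ifP => // _; apply/setP=> a.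
by rewrite !inE !(negbTE (elt_neq _ _ st)) orbF.
Qed.

Lemma shift_set_binom X : X \in prod_binom n k -> shift_set i j X \in prod_binom n k.
Proof.
rewrite !inE => /forallP cardX; apply/forallP=> s.
have [->|st] := eqVneq s t; first by rewrite part_shift_set card_shift_part.
by rewrite part_shift_set_ne.
Qed.

Lemma shift_set_sub X : shift_set i j X \subset elt i |: X.
Proof.
rewrite /shift_set; case: ifP => _; first exact: subsetUr.
by rewrite setUC setUS // subsetDl.
Qed.

Lemma shift_fam_id F : {in F, forall X, shift_set i j X \in F} -> shift_fam i j F = F.
Proof.
move=> FX; apply/setP=> X; rewrite !inE; apply/idP/idP.
  by case/orP=> [/imsetP[Y YF ->]|/andP[]//]; apply: FX.
by move=> XF; rewrite XF FX ?orbT.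
Qed.

Lemma shift_set_in_fam F A : A \in F -> shift_set i j A \in shift_fam i j F.
Proof. by move=> AF; rewrite in_setU imset_f. Qed.

Lemma shift_fam_common_elt F :
    ~ trivially_intersecting F -> trivially_intersecting (shift_fam i j F) ->
  forall A, A \in shift_fam i j F -> elt i \in A.
Proof.
move=> Fnt [x shFx]; suff /eqP <- : x == elt i by [].
apply: contraT => xi; case: Fnt; exists x => A AF.
have /(subsetP (shift_set_sub A)) : x \in shift_set i j A by apply/shFx/shift_set_in_fam.
by rewrite !inE (negbTE xi).
Qed.

End Shifting.

Section Compression.
Variables (p : nat) (n k : 'I_p -> nat) (Q : {set 'I_p}) (F : {set {set ground n}}).
Hypotheses (le_kn : forall s, s \in Q -> k s <= n s) (F_binom : F \subset prod_binom n k).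
Hypothesis F_shifted : forall s, s \in Q -> t_shifted s F.
Implicit Type X : {set ground n}.

Definition compress X : {set ground n} :=
  [set x : ground n | if tag x \in Q then tagged x < k (tag x) else x \in X].

Lemma part_compress X s :
  part (compress X) s = if s \in Q then [set a : 'I_(n s) | a < k s] else part X s.
Proof. by apply/setP=> a; rewrite !inE /=; case: ifP; rewrite ?inE. Qed.

Lemma compress_shift_set q (a b : 'I_(n q)) X :
  q \in Q -> compress (shift_set a b X) = compress X.
Proof.
move=> qQ; apply/partP=> s; rewrite !part_compress; case: ifPn => // sQ.
by rewrite part_shift_set_ne //; apply: contraNneq sQ => ->.
Qed.

Lemma compress_step X : X \in prod_binom n k -> X != compress X ->
  exists q (a b : 'I_(n q)), [/\ q \in Q, a < k q <= b, elt a \notin X & elt b \in X].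
Proof.
move=> Xbinom neX.
have /exists_inP[q qQ neXq] : [exists q in Q, part X q != [set a : 'I_(n q) | a < k q]].
  apply: contraNT neX => /exists_inPn eqXQ; apply/eqP/partP=> s.
  by rewrite part_compress; case: ifP => // sQ; apply/eqP/negPn/eqXQ.
have cardXq : #|part X q| = #|[set a : 'I_(n q) | a < k q]|.
  by rewrite (card_part_binom _ Xbinom) card_init ?le_kn.
have /subsetPn[b bX bk] : ~~ (part X q \subset [set a : 'I_(n q) | a < k q]).
  by apply: contra neXq => /(subset_cardP cardXq)/setP ->; rewrite eqxx.
have /subsetPn[a ak aX] : ~~ ([set a : 'I_(n q) | a < k q] \subset part X q).
  by apply: contra neXq => /(subset_cardP (esym cardXq))/setP ->; rewrite eqxx.
exists q, a, b; rewrite -!in_part; split=> //.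
by move: ak bk; rewrite !inE -leqNgt => -> ->.
Qed.

Lemma setD_compress_shift q (a b : 'I_(n q)) X :
    q \in Q -> a < k q <= b -> elt a \notin X -> elt b \in X ->
  shift_set a b X :\: compress X = (X :\: compress X) :\ elt b.
Proof.
move=> qQ /andP[ak kb] aX bX; rewrite /shift_set (negbTE aX) bX /=.
apply/setP=> x; rewrite !inE; have [->|xa] := eqVneq x (elt a); last first.
  by rewrite orbF andbCA.
by rewrite /= qQ ak (negbTE aX) !andbF.
Qed.

Lemma compress_in X : X \in F -> compress X \in F.
Proof.
have [m] := ubnP #|X :\: compress X|; elim: m X => // m IH X ltXm XF.
have [<- //|neX] := eqVneq X (compress X).
have [q [a [b [qQ akb aX bX]]]] := compress_step (subsetP F_binom _ XF) neX.
have /andP[ak kb] := akb.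
rewrite -(compress_shift_set a b X qQ); apply: IH; last first.
  by rewrite -(F_shifted qQ (leq_trans ak kb)) !inE imset_f.
rewrite compress_shift_set // setD_compress_shift //.
have bXc : elt b \in X :\: compress X by rewrite !inE /= qQ -leqNgt kb.
by move: ltXm; rewrite (cardsD1 (elt b)) bXc add1n ltnS.
Qed.

End Compression.

Definition maj3 (x y z : bool) : bool := [|| x && y, x && z | y && z].

Lemma maj3_meet (x y z x' y' z' : bool) :
  maj3 x y z -> maj3 x' y' z' -> [|| x && x', y && y' | z && z'].
Proof. by case: x; case: y; case: z; case: x'; case: y'; case: z'. Qed.

Lemma maj3_mono (x y z x' y' z' : bool) :
  (x -> x') -> (y -> y') -> (z -> z') -> maj3 x y z -> maj3 x' y' z'.
Proof.
move=> xx yy zz /or3P[] /andP[];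
  [move=> /xx -> /yy -> | move=> /xx -> /zz -> | move=> /yy -> /zz ->];
  by rewrite /maj3 /= ?orbT.
Qed.

Lemma maj3_cover (x y z x' y' z' : bool) :
  x || x' -> y || y' -> z || z' -> maj3 x y z || maj3 x' y' z'.
Proof. by case: x; case: y; case: z; case: x'; case: y'; case: z'. Qed.

Lemma maj3_neq (T : eqType) (a b c s : T) :
  a != b -> a != c -> b != c -> maj3 (a != s) (b != s) (c != s).
Proof.
by case: (a =P s) => [->|_]; case: (b =P s) => [->|_]; case: (c =P s) => [->|_];
  rewrite ?eqxx.
Qed.

Section Majority.
Variables (p : nat) (n k : 'I_p -> nat).
Hypothesis n_gt0 : forall s, 0 < n s.
Implicit Types (X A : {set ground n}) (R : {set 'I_p}).

Definition zero s : 'I_(n s) := Ordinal (n_gt0 s).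

Lemma zero_shift_set t (i j : 'I_(n t)) X u :
  i < j -> elt (zero u) \in X -> elt (zero u) \in shift_set i j X.
Proof.
rewrite /shift_set => ij zX; case: ifP => // _; rewrite !inE zX andbT.
apply/orP; left; have [->|ut] := eqVneq u t; last exact: elt_neq.
by rewrite eq_elt; apply: contraTneq ij => <-; rewrite ltn0.
Qed.

Definition pair_family (x y : forall s, 'I_(n s)) R : {set {set ground n}} :=
  [set X in prod_binom n k | [forall u in R, (elt (x u) \in X) || (elt (y u) \in X)]].

Definition with_zeros R X : {set ground n} :=
  [set x : ground n | if tag x \in R then tagged x == zero (tag x) else x \in X].

Lemma with_zeros_binom R X : {in R, forall s, k s = 1} ->
  X \in prod_binom n k -> with_zeros R X \in prod_binom n k.
Proof.
move=> kR; rewrite !inE => /forallP cardX; apply/forallP=> s.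
case: (boolP (s \in R)) => sR.
  rewrite kR // (_ : part _ s = [set zero s]) ?cards1 //.
  by apply/setP=> a; rewrite !inE /= sR.
by rewrite (_ : part _ s = part X s) //; apply/setP=> a; rewrite !inE /= (negbTE sR).
Qed.

Definition swap_zero (x : forall s, 'I_(n s)) : {set ground n} -> {set ground n} :=
  relab (fun s => tperm (zero s) (x s)).

Lemma in_swap_zero x X u : (elt (zero u) \in swap_zero x X) = (elt (x u) \in X).
Proof. by rewrite inE /= tpermL. Qed.

Variables a b c : 'I_p.

Definition majority : {set {set ground n}} :=
  [set X in prod_binom n k |
    maj3 (elt (zero a) \in X) (elt (zero b) \in X) (elt (zero c) \in X)].

Lemma majority_intersecting : intersecting majority.
Proof.
move=> A B; rewrite !inE => /andP[_ majA] /andP[_ majB]; apply/set0Pn.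
by case/or3P: (maj3_meet majA majB) => /andP[xA xB]; eexists; rewrite inE; apply/andP;
  split; eassumption.
Qed.

Lemma majority_shifted : shifted majority.
Proof.
move=> t i j ij; apply: shift_fam_id => X; rewrite inE => /andP[Xbinom majX].
by rewrite inE shift_set_binom //=; move: majX; apply: maj3_mono; apply: zero_shift_set.
Qed.

Lemma majority_nontrivial :
    a != b -> a != c -> b != c -> {in [set a; b; c], forall s, k s = 1} ->
    (forall x : ground n, exists2 A, A \in prod_binom n k & x \notin A) ->
  nontrivially_intersecting majority.
Proof.
move=> ab ac bc k1 avoid; split; first exact: majority_intersecting.
case=> -[s y] common; have [A Abinom yA] := avoid (elt y).
pose R := [set a; b; c] :\ s.
have zR u : u != s -> u \in [set a; b; c] -> elt (zero u) \in with_zeros R A.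
  by move=> us uabc; rewrite [_ \in with_zeros _ _]inE /= in_setD1 us uabc eqxx.
have : elt y \in with_zeros R A.
  apply: common; rewrite inE with_zeros_binom //=; last first.
    by move=> u; rewrite inE => /andP[_]; apply: k1.
  move: (maj3_neq s ab ac bc); apply: maj3_mono => us;
    by apply: (zR _ us); rewrite !inE eqxx ?orbT.
by rewrite inE /= !inE eqxx (negbTE yA).
Qed.

Lemma card_pair_family x y R : a \in R -> b \in R -> c \in R ->
  #|pair_family x y R| <= 2 * #|majority|.
Proof.
move=> aR bR cR; have card_swap z : #|swap_zero z @: majority| = #|majority|.
  exact/card_imset/relab_inj.
rewrite mul2n -addnn -{1}(card_swap x) -(card_swap y).
apply: leq_trans (leq_subr #|swap_zero x @: majority :&: swap_zero y @: majority| _).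
rewrite -cardsU; apply: subset_leq_card; apply/subsetP=> X.
rewrite inE => /andP[Xbinom /forall_inP cover].
have swapK z : involutive (swap_zero z) by apply: relabK => s; apply: tpermK.
have in_swap z : maj3 (elt (z a) \in X) (elt (z b) \in X) (elt (z c) \in X) ->
    X \in swap_zero z @: majority.
  move=> majX; apply/imsetP; exists (swap_zero z X); last by rewrite swapK.
  by rewrite inE relab_binom //= !in_swap_zero.
have := maj3_cover (cover a aR) (cover b bR) (cover c cR).
by rewrite inE => /orP[] /in_swap ->; rewrite ?orbT.
Qed.

End Majority.

Section MaximumFamily.
Variables (p : nat) (n k : 'I_p -> nat) (Q : {set 'I_p}) (F : {set {set ground n}}).
Hypotheses (le_kn : forall s, s \in Q -> k s <= n s) (k1 : forall t, t \notin Q -> k t = 1).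
Hypotheses (F_binom : F \subset prod_binom n k) (F_nontriv : nontrivially_intersecting F).
Hypothesis F_max : forall G : {set {set ground n}}, G \subset prod_binom n k ->
  nontrivially_intersecting G -> #|G| <= #|F|.
Hypothesis F_shifted : forall s, s \in Q -> t_shifted s F.
Variables i_ j_ : forall s, 'I_(n s).
Hypothesis lt_ij : forall s, s \notin Q -> i_ s < j_ s.
Hypothesis shift_trivial : forall s, s \notin Q ->
  trivially_intersecting (shift_fam (i_ s) (j_ s) F).
Implicit Types (X Y A B W Z : {set ground n}).

Lemma neq_ij w : w \notin Q -> i_ w != j_ w.
Proof. by move/lt_ij; rewrite neq_ltn => ->. Qed.

Lemma part_notin_Q A w : A \in F -> w \notin Q ->
  part A w = [set i_ w] \/ part A w = [set j_ w].
Proof.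
move=> AF wQ; have /cards1P[x Ax] : #|part A w| == 1.
  by rewrite (card_part_binom _ (subsetP F_binom _ AF)) k1.
have : i_ w \in shift_part (i_ w) (j_ w) [set x].
  rewrite -Ax -part_shift_set in_part.
  exact/(shift_fam_common_elt F_nontriv.2 (shift_trivial wQ))/shift_set_in_fam.
by rewrite Ax => /mem_shift_part1/orP[]/eqP ->; [left | right].
Qed.

Definition flip w : {set ground n} -> {set ground n} :=
  relab (fun s => if s == w then tperm (i_ s) (j_ s) else 1%g).

Lemma flipK w : involutive (flip w).
Proof. by rewrite /flip; apply: relabK => s; case: ifP => _ a; rewrite ?tpermK ?perm1. Qed.

Lemma part_flip w X : part (flip w X) w = tperm (i_ w) (j_ w) @^-1: part X w.
Proof. by rewrite part_relab eqxx. Qed.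

Lemma part_flip_ne w X s : s != w -> part (flip w X) s = part X s.
Proof. by move=> sw; apply/setP=> a; rewrite !inE /= (negbTE sw) perm1. Qed.

Lemma flip_cover w X u :
  (elt (i_ u) \in flip w X) || (elt (j_ u) \in flip w X) =
  (elt (i_ u) \in X) || (elt (j_ u) \in X).
Proof. by rewrite !inE /=; case: eqP => _; rewrite ?tpermL ?tpermR ?perm1 // orbC. Qed.

Lemma part_flip_swap A B w : A \in F -> B \in F -> w \notin Q ->
  part A w != part B w -> part (flip w A) w = part B w.
Proof.
move=> AF BF wQ; rewrite part_flip.
by case: (part_notin_Q AF wQ) => ->; case: (part_notin_Q BF wQ) => ->;
  rewrite ?eqxx // => _; rewrite ?preim_tperm1 // tpermC preim_tperm1.
Qed.

Lemma flip_shift_set B w : w \notin Q -> part B w = [set j_ w] ->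
  shift_set (i_ w) (j_ w) B = flip w B.
Proof.
move=> wQ Bw; apply/partP=> s; have [->|sw] := eqVneq s w; last first.
  by rewrite part_shift_set_ne // part_flip_ne.
rewrite part_shift_set part_flip Bw tpermC preim_tperm1 /shift_part !inE eqxx.
by rewrite (negbTE (neq_ij wQ)) setDv set0U.
Qed.

(* The shifted family has [i_ w] as common element, so no set of [F] through [j_ w]
   can stay in [F] after its [w]-part is swapped. *)
Lemma flip_notin A w : A \in F -> w \notin Q -> flip w A \notin F.
Proof.
move=> AF wQ; apply/negP=> fAF.
suff [B [BF fBF Bw]] : exists B, [/\ B \in F, flip w B \in F & part B w = [set j_ w]].
  have : elt (i_ w) \in B.
    apply: shift_fam_common_elt F_nontriv.2 (shift_trivial wQ) _ _.
    by rewrite in_setU inE BF flip_shift_set // fBF orbT.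
  by rewrite -in_part Bw in_set1 (negbTE (neq_ij wQ)).
case: (part_notin_Q AF wQ) => Aw; last by exists A.
by exists (flip w A); rewrite flipK part_flip Aw preim_tperm1.
Qed.

(* Otherwise [flip w] would exchange the compressions of [X] and [Y], which lie in [F]. *)
Lemma eq_part_notin_Q X Y w : X \in F -> Y \in F -> w \notin Q ->
  (forall u, u \notin Q -> u != w -> part X u = part Y u) -> part X w = part Y w.
Proof.
move=> XF YF wQ agree; apply/eqP; apply: contraT => neXY.
have cXF := compress_in le_kn F_binom F_shifted XF.
have cYF := compress_in le_kn F_binom F_shifted YF.
suff eqc : flip w (compress k Q X) = compress k Q Y.
  by move: (flip_notin cXF wQ); rewrite eqc cYF.
apply/partP=> s; have [->|sw] := eqVneq s w.
  by apply: part_flip_swap; rewrite // !part_compress (negbTE wQ).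
by rewrite part_flip_ne // !part_compress; case: ifPn => // sQ; apply: agree.
Qed.

Lemma exists_parts_ij w : w \notin Q -> exists X Y,
  [/\ X \in F, Y \in F, part X w = [set i_ w] & part Y w = [set j_ w]].
Proof.
move=> wQ; have avoid := nontrivial_avoid F_nontriv.2.
have [X XF jX] := avoid (elt (j_ w)); have [Y YF iY] := avoid (elt (i_ w)).
exists X, Y; split=> //.
  by case: (part_notin_Q XF wQ) => // Xw; move: jX; rewrite -in_part Xw set11.
by case: (part_notin_Q YF wQ) => // Yw; move: iY; rewrite -in_part Yw set11.
Qed.

Lemma exists_second_notin_Q t : t \notin Q -> exists2 u, u \notin Q & u != t.
Proof.
move=> tQ; case: (pickP [pred u | (u \notin Q) && (u != t)]) => [u /andP[]|none].
  by exists u.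
have [X [Y [XF YF Xt Yt]]] := exists_parts_ij tQ.
have : part X t = part Y t.
  by apply: eq_part_notin_Q => // u uQ ut; have := none u; rewrite /= uQ ut.
by rewrite Xt Yt => /set1_inj/eqP; rewrite (negbTE (neq_ij tQ)).
Qed.

Lemma meets_all_in_F Z : Z \in prod_binom n k -> Z != set0 ->
  {in F, forall W, Z :&: W != set0} -> Z \in F.
Proof.
move=> Zbinom Z0 ZF; apply: contraT => ZnF.
have : #|Z |: F| <= #|F|.
  apply: F_max; last exact: nontrivially_intersecting_setU1.
  by apply/subsetP=> A /setU1P[->|/(subsetP F_binom)].
by rewrite cardsU1 ZnF ltnn.
Qed.

Lemma eq_part_of_neq A B C w : A \in F -> B \in F -> C \in F -> w \notin Q ->
  part A w != part C w -> part B w != part C w -> part A w = part B w.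
Proof.
move=> AF BF CF wQ.
by case: (part_notin_Q AF wQ) => ->; case: (part_notin_Q BF wQ) => ->;
  case: (part_notin_Q CF wQ) => ->; rewrite ?eqxx.
Qed.

(* With only two parts [t], [u] outside [Q], swapping the [t]-part of a set of [F]
   through [i_ t] yields a set meeting every member of [F], against maximality. *)
Lemma exists_third_notin_Q t u : t \notin Q -> u \notin Q -> u != t ->
  exists c, [/\ c \notin Q, c != t & c != u].
Proof.
move=> tQ uQ ut.
case: (pickP [pred c | [&& c \notin Q, c != t & c != u]]) => [c /and3P[]|none].
  by exists c.
have others c : c \notin Q -> c != t -> c = u.
  by move=> cQ ct; apply/eqP; have := none c; rewrite /= cQ ct => /negbFE.
have [X [Y [XF YF Xt Yt]]] := exists_parts_ij tQ.
have agree_t W1 W2 : W1 \in F -> W2 \in F -> part W1 u = part W2 u -> part W1 t = part W2 t.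
  by move=> W1F W2F equ; apply: eq_part_notin_Q => // c cQ ct; rewrite (others c).
have neXYu : part X u != part Y u.
  apply: contraTneq (neq_ij tQ) => /(agree_t _ _ XF YF).
  by rewrite Xt Yt => /set1_inj ->; rewrite eqxx.
have iW W : W \in F -> part W t = [set i_ t] -> part W u = part X u.
  move=> WF Wt; apply/eqP; apply: contraT => neWXu.
  have neYXu : part Y u != part X u by rewrite eq_sym.
  have := agree_t _ _ WF YF (eq_part_of_neq WF YF XF uQ neWXu neYXu).
  by rewrite Wt Yt => /set1_inj/eqP; rewrite (negbTE (neq_ij tQ)).
have [a aX] : exists a, a \in part X u.
  by apply/set0Pn; rewrite -card_gt0 (card_part_binom _ (subsetP F_binom _ XF)) k1.
suff : flip t X \in F by rewrite (negbTE (flip_notin XF tQ)).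
apply: meets_all_in_F; first exact/relab_binom/(subsetP F_binom).
  by apply/set0Pn; exists (elt a); rewrite -in_part part_flip_ne.
move=> W WF; case: (part_notin_Q WF tQ) => Wt.
  by apply: (setI_part_neq0 (a := a)); rewrite ?part_flip_ne ?(iW W).
by apply: (setI_part_neq0 (a := j_ t)); rewrite ?part_flip ?Xt ?preim_tperm1 ?Wt set11.
Qed.

Lemma card_F_le_pair_family w : w \notin Q -> 2 * #|F| <= #|pair_family k i_ j_ (~: Q)|.
Proof.
move=> wQ; have FQ A : A \in F -> A \in pair_family k i_ j_ (~: Q).
  move=> AF; rewrite inE (subsetP F_binom) //=; apply/forall_inP => u; rewrite inE => uQ.
  by case: (part_notin_Q AF uQ) => Au; rewrite -!in_part Au !inE eqxx ?orbT.
have disj : F :&: flip w @: F = set0.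
  apply/setP=> X; rewrite !inE; apply/andP=> -[XF /imsetP[Y YF eqX]].
  by move: XF; rewrite eqX; apply/negP/flip_notin.
have card_flip : #|flip w @: F| = #|F| by apply/card_imset/relab_inj.
rewrite mul2n -addnn -{2}card_flip -cardsUI disj cards0 addn0.
apply/subset_leq_card/subsetP=> X /setUP[/FQ //|/imsetP[Y YF ->]].
rewrite inE relab_binom ?(subsetP F_binom) //=.
have := FQ _ YF; rewrite inE => /andP[_ /forall_inP cov].
by apply/forall_inP => u uQ; rewrite flip_cover cov.
Qed.

Hypotheses (n_gt0 : forall s, 0 < n s) (Q_proper : Q \proper [set: 'I_p]).

Lemma exists_shifted_max : exists F', max_nontriv n k F' /\ shifted F'.
Proof.
have [_ [t _ tQ]] := properP Q_proper.
have [u uQ ut] := exists_second_notin_Q tQ.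
have [c [cQ ct cu]] := exists_third_notin_Q tQ uQ ut.
exists (majority k n_gt0 t u c); split; last exact: majority_shifted.
split.
- by apply/subsetP=> X; rewrite inE => /andP[].
- apply: majority_nontrivial; rewrite 1?[_ == u]eq_sym 1?[_ == c]eq_sym //.
    by move=> s; rewrite !inE => /orP[/orP[]|] /eqP ->; apply: k1.
  move=> x; have [A AF xA] := nontrivial_avoid F_nontriv.2 x.
  by exists A; rewrite ?(subsetP F_binom).
move=> G Gbinom Gnt; rewrite -(leq_pmul2l (isT : 0 < 2)).
apply: (@leq_trans (2 * #|F|)); first by rewrite leq_mul2l F_max ?orbT.
apply: leq_trans (card_F_le_pair_family tQ) _.
by apply: card_pair_family; rewrite in_setC.
Qed.

End MaximumFamily.

Unset Implicit Arguments.

Theorem lemma2p4 (p : nat) (n k : 'I_p -> nat)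
  (hp : 1 <= p) (hn : forall s, 1 <= n s) (hk : forall s, 1 <= k s <= n s)
  (Q : {set 'I_p}) (F : {set {set ground n}}) :
  Q \proper [set: 'I_p] ->
  (forall t, t \notin Q -> k t = 1) ->
  max_nontriv n k F ->
  Q_shifted Q F ->
  exists F' : {set {set ground n}}, max_nontriv n k F' /\ shifted F'.
Proof.
move=> Q_proper k1 [F_binom F_nontriv F_max] [_ F_shifted F_shift_trivial].
pose P s (ij : 'I_(n s) * 'I_(n s)) :=
  s \notin Q -> ij.1 < ij.2 /\ trivially_intersecting (shift_fam ij.1 ij.2 F).
have [ij ijP] : exists ij, forall s, P s (ij s).
  apply: fin_all_exists => s; case: (boolP (s \in Q)) => sQ.
    by exists (Ordinal (hn s), Ordinal (hn s)); rewrite /P sQ.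
  by have [i [j ijF]] := F_shift_trivial s sQ; exists (i, j).
have le_kn s : s \in Q -> k s <= n s by case/andP: (hk s).
exact: (exists_shifted_max le_kn k1 F_binom F_nontriv F_max F_shifted
  (fun s sQ => (ijP s sQ).1) (fun s sQ => (ijP s sQ).2) hn Q_proper).
Qed.
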